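(* Let $k\ge3$, $\ell\ge2$ and let $G=\mathrm{Sym}(k)\wr\mathrm{Sym}(\ell)$ act in product action on $[k]^\ell$, where $[k]=\{1,\dots,k\}$. Then $G$ contains quasi-semiregular elements. Moreover, if $g\in G$ is a quasi-semiregular element of prime order, then $g$ lies in the base group, $g=(h_1,\dots,h_\ell)\in\mathrm{Sym}(k)^\ell$, and each $h_i$ is a quasi-semiregular permutation of $[k]$.
   Context: Product action: $(h_1,\dots,h_\ell)\in\mathrm{Sym}(k)^\ell$ maps $(\alpha_1,\dots,\alpha_\ell)\mapsto(\alpha_1^{h_1},\dots,\alpha_\ell^{h_\ell})$ and $\sigma\in\mathrm{Sym}(\ell)$ maps $(\alpha_1,\dots,\alpha_\ell)\mapsto(\alpha_{1\sigma^{-1}},\dots,\alpha_{\ell\sigma^{-1}})$. A permutation $g$ is quasi-semiregular if $\langle g\rangle$ has a unique fixed point and acts semiregularly (only the identity fixes a point) on the remaining points. *)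

From mathcomp Require Import all_boot all_fingroup.
Set Implicit Arguments. Unset Strict Implicit. Unset Printing Implicit Defensive.
Local Open Scope group_scope.

Definition quasi_semiregular (T : finType) (g : {perm T}) : Prop :=
  exists x : T,
    (forall y : T, (forall a, a \in <[g]> -> a y = y) <-> y = x) /\
    (forall y : T, y <> x -> forall a, a \in <[g]> -> a y = y -> a = 1).

(* Product action of (h, s) in Sym(k)^l x| Sym(l) on [k]^l = {ffun 'I_l -> 'I_k}:
   alpha^{h s} = (alpha^h)^s, i.e. coordinate i of the image is
   h_{i s^-1} (alpha_{i s^-1}). *)
Definition prod_fun (k l : nat) (h : {ffun 'I_l -> {perm 'I_k}}) (s : {perm 'I_l})
  (a : {ffun 'I_l -> 'I_k}) : {ffun 'I_l -> 'I_k} :=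
  [ffun i => h (s^-1 i) (a (s^-1 i))].

Lemma prod_fun_inj k l h s : injective (@prod_fun k l h s).
Proof.
move=> a b /ffunP E; apply/ffunP => j.
have := E (s j); rewrite !ffunE permK => /perm_inj //.
Qed.

Definition prod_perm k l h s : {perm {ffun 'I_l -> 'I_k}} :=
  perm (@prod_fun_inj k l h s).

Definition wreath_prod (k l : nat) : {set {perm {ffun 'I_l -> 'I_k}}} :=
  [set prod_perm h s | h : {ffun 'I_l -> {perm 'I_k}}, s : {perm 'I_l}].

From mathcomp Require Import all_boot all_fingroup ssralg zmodp cyclic.
Import GRing.Theory.
Set Implicit Arguments.
Unset Strict Implicit.
Unset Printing Implicit Defensive.
Local Open Scope group_scope.

(* For existence, take the diagonal element (c, ..., c) of the base group,
   where c is a cycle on all points of [k] but one.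
   Conversely let g = (h, s) be quasi-semiregular of prime order p with fixed
   point x, and suppose s moves some j. Then s^p = 1, so the s-orbit of j has
   length p and g^d = 1 whenever s^d fixes j. Hence the fixed-point equations
   y_(s i) = h_i(y_i) can be solved along this orbit from any prescribed
   value y_j (with y = x elsewhere), and k >= 2 gives a second fixed point.
   So s = 1, and varying one coordinate of x shows that each h_i is
   quasi-semiregular. *)

Lemma fix_cycleE (T : finType) (g : {perm T}) y :
  (forall a, a \in <[g]> -> a y = y) <-> g y = y.
Proof.
split=> [|gy a /cycleP [n ->]]; last exact: permX_fix.
by apply; apply: cycle_id.
Qed.

Lemma quasi_semiregularP (T : finType) (g : {perm T}) :
  quasi_semiregular g <->
  exists x, (forall y, g y = y <-> y = x) /\
            (forall n y, y != x -> (g ^+ n) y = y -> g ^+ n = 1).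
Proof.
split=> -[x [fixE semi]]; exists x; split.
- by move=> y; apply: iff_trans (fixE y); apply: iff_sym (fix_cycleE g y).
- by move=> n y /eqP yx gy; apply: semi yx _ (mem_cycle g n) gy.
- by move=> y; apply: iff_trans (fixE y); apply: fix_cycleE.
- by move=> y /eqP yx _ /cycleP [n ->]; apply: semi.
Qed.

Section ProductAction.

Variables k l : nat.
Implicit Types (h : {ffun 'I_l -> {perm 'I_k}}) (s t : {perm 'I_l}).

Lemma prod_permE h s v i : prod_perm h s v i = h (s^-1 i) (v (s^-1 i)).
Proof. by rewrite permE ffunE. Qed.

Lemma prod_permM h s h' s' :
  prod_perm h s * prod_perm h' s' =
  prod_perm [ffun m => h m * h' (s m)] (s * s').
Proof.
apply/permP => v; apply/ffunP => i.
by rewrite permM !prod_permE ffunE invMg permM permM permKV.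
Qed.

Lemma prod_permX h s n : exists h', prod_perm h s ^+ n = prod_perm h' (s ^+ n).
Proof.
elim: n => [|n [h' IH]].
  exists [ffun _ => 1]; apply/permP => v; apply/ffunP => i.
  by rewrite prod_permE !expg0 ffunE invg1 !perm1.
by eexists; rewrite !expgSr IH prod_permM.
Qed.

Lemma prod_perm1X h n v i : (prod_perm h 1 ^+ n) v i = (h i ^+ n) (v i).
Proof.
elim: n => [|n IH]; first by rewrite !expg0 !perm1.
by rewrite !expgSr !permM prod_permE invg1 perm1 IH.
Qed.

End ProductAction.

Lemma prod_perm_eq1 k l (h : {ffun 'I_l -> {perm 'I_k.+2}}) t :
  prod_perm h t = 1 -> t = 1.
Proof.
move=> ht1; apply/permP => m; rewrite perm1; apply/eqP/negPn/negP => tm.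
(* the point that is ord0 off coordinate m shows h m on coordinate t m *)
have hm0 b : h m b = ord0.
  pose v := [ffun q => if q == m then b else ord0].
  have := congr1 (fun g : {perm _} => g v (t m)) ht1.
  by rewrite prod_permE permK perm1 !ffunE eqxx (negbTE tm).
by have := hm0 ord_max; rewrite -(hm0 ord0) => /perm_inj.
Qed.

Lemma prod_perm_expg_eq1 k l (h : {ffun 'I_l -> {perm 'I_k.+2}}) s n :
  prod_perm h s ^+ n = 1 -> s ^+ n = 1.
Proof. by have [h' ->] := prod_permX h s n; apply: prod_perm_eq1. Qed.

Lemma permX_findexE (T : finType) (s : {perm T}) x y :
  ((s ^+ findex s x y) x == y) = fconnect s x y.
Proof.
apply/eqP/idP => [<- | /iter_findex]; last by rewrite permX.
by rewrite permX fconnect_iter.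
Qed.

Section SolveAlongOrbit.

Variables (k l : nat) (h : {ffun 'I_l -> {perm 'I_k}}) (s : {perm 'I_l}).
Variables (x : {ffun 'I_l -> 'I_k}) (j : 'I_l) (a : 'I_k).

Let g := prod_perm h s.
Hypothesis gx : g x = x.
Hypothesis orbit_period : forall d, (s ^+ d) j = j -> g ^+ d = 1.

Let w := [ffun m => if m == j then a else x m].

Lemma expg_w_off n i : (s ^+ n) j != i -> (g ^+ n) w i = x i.
Proof.
elim: n i => [|n IH] i.
  by rewrite expg0 !perm1 ffunE eq_sym => /negbTE ->.
rewrite !expgSr !permM => sji; rewrite prod_permE IH; last first.
  by apply: contra sji => /eqP ->; rewrite permKV.
by rewrite -prod_permE -/g gx.
Qed.

Lemma expg_eq_of_orbit n n' : (s ^+ n) j = (s ^+ n') j -> g ^+ n = g ^+ n'.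
Proof.
wlog le_nn' : n n' / n <= n'.
  by move=> IH e; case/orP: (leq_total n n') => ?; [|symmetry]; apply: IH.
rewrite -(subnKC le_nn') !expgD => e.
suff -> : g ^+ (n' - n) = 1 by rewrite mulg1.
apply: orbit_period; apply: (@perm_inj _ (s ^+ n)).
by rewrite -permM -expgD addnC expgD -e.
Qed.

Lemma expg_w_eq n n' i :
  ((s ^+ n) j == i) = ((s ^+ n') j == i) -> (g ^+ n) w i = (g ^+ n') w i.
Proof.
case: eqP => [<- /esym/eqP e | /eqP off /esym off'].
  by rewrite (expg_eq_of_orbit e).
by rewrite !expg_w_off // off'.
Qed.

Lemma prod_perm_fix_extend : exists2 y, g y = y & y j = a.
Proof.
(* y_i is read off g^t w, where t is the position of i on the s-orbit of j *)
exists [ffun i => (g ^+ findex s j i) w i]; last first.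
  by rewrite ffunE findex0 expg0 perm1 ffunE eqxx.
apply/ffunP => i; rewrite prod_permE !ffunE.
rewrite -[h _ _]prod_permE -/g -permM -expgSr.
apply: expg_w_eq; rewrite expgSr permM -{2}(permKV s i) (inj_eq perm_inj).
by rewrite !permX_findexE [LHS](same_fconnect1_r perm_inj) permKV.
Qed.

End SolveAlongOrbit.

Lemma prime_order_orbit_period k l (h : {ffun 'I_l -> {perm 'I_k.+2}}) s j :
  prime #[prod_perm h s] -> s j != j ->
  forall d, (s ^+ d) j = j -> prod_perm h s ^+ d = 1.
Proof.
set g := prod_perm h s => pr_g sj d sdj.
have ord_s : #[s] = #[g].
  apply/(prime_nt_dvdP pr_g).
    by rewrite order_eq1; apply: contraNneq sj => ->; rewrite perm1.
  by rewrite order_dvdn; apply/eqP/(prod_perm_expg_eq1 (h := h))/expg_order.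
apply/eqP; rewrite -order_dvdn -ord_s; apply: contraR sj => ndvd.
have /eqP gen_sd : generator <[s]> (s ^+ d).
  by rewrite generator_coprime prime_coprime // ord_s.
have : s \in <[s ^+ d]> by rewrite -gen_sd cycle_id.
by case/cycleP => m ->; rewrite (permX_fix _ sdj).
Qed.

Lemma prime_quasi_semiregular_top_eq1 k l
    (h : {ffun 'I_l -> {perm 'I_k.+2}}) s :
  prime #[prod_perm h s] -> quasi_semiregular (prod_perm h s) -> s = 1.
Proof.
move=> pr_g /quasi_semiregularP [x [fixE _]].
apply/permP => j; rewrite perm1; apply/eqP/negPn/negP => sj.
have [a ax] : exists a : 'I_k.+2, a != x j.
  exists (if x j == ord0 then ord_max else ord0).
  by case: (x j =P ord0) => [-> // | /eqP]; rewrite eq_sym.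
have [y gy yj] := prod_perm_fix_extend a (proj2 (fixE x) erefl)
  (prime_order_orbit_period pr_g sj).
by move: ax; rewrite -yj (proj1 (fixE y) gy) eqxx.
Qed.

Lemma quasi_semiregular_base_component k l
    (h : {ffun 'I_l -> {perm 'I_k}}) i :
  quasi_semiregular (prod_perm h 1) -> quasi_semiregular (h i).
Proof.
move=> /quasi_semiregularP [x [fixE semi]]; apply/quasi_semiregularP.
exists (x i).
pose upd z := [ffun m => if m == i then z else x m].
have upd_i z : upd z i = z by rewrite ffunE eqxx.
have hx n m : (h m ^+ n) (x m) = x m.
  by rewrite -prod_perm1X (permX_fix _ (proj2 (fixE x) erefl)).
have fix_upd n z : (h i ^+ n) z = z -> (prod_perm h 1 ^+ n) (upd z) = upd z.
  move=> hz; apply/ffunP => m; rewrite prod_perm1X !ffunE.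
  by case: eqP => [->|_]; rewrite ?hz ?hx.
split=> [z | n z zx hz].
  split=> [hz | ->]; last by rewrite -[h i]expg1 hx.
  have /fixE <- : prod_perm h 1 (upd z) = upd z.
    by rewrite -[prod_perm h 1]expg1 fix_upd ?expg1.
  by rewrite upd_i.
have g1 : prod_perm h 1 ^+ n = 1.
  by apply: semi (fix_upd n z hz); apply: contra zx => /eqP <-; rewrite upd_i.
by apply/permP => c; rewrite perm1 -{1}(upd_i c) -prod_perm1X g1 perm1 upd_i.
Qed.

Lemma lift_permX n (i : 'I_n.+1) (s : {perm 'I_n}) m :
  lift_perm i i s ^+ m = lift_perm i i (s ^+ m).
Proof.
elim: m => [|m IH]; first by rewrite !expg0 lift_perm1.
by rewrite !expgSr IH lift_permM.
Qed.

Lemma quasi_semiregular_lift n (s : {perm 'I_n}) :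
  s != 1 -> (forall m y, (s ^+ m) y = y -> s ^+ m = 1) ->
  quasi_semiregular (lift_perm ord0 ord0 s).
Proof.
move=> s_neq1 semi; apply/quasi_semiregularP; exists ord0; split.
  move=> y; split=> [|->]; last exact: lift_perm_id.
  case: (unliftP ord0 y) => [u -> | -> //].
  rewrite lift_perm_lift => /lift_inj su.
  have := semi 1%N u; rewrite !expg1 => /(_ su) s1.
  by rewrite s1 eqxx in s_neq1.
move=> m y; case: (unliftP ord0 y) => [u -> _ | ->]; last by rewrite eqxx.
by rewrite lift_permX lift_perm_lift => /lift_inj /semi ->; apply: lift_perm1.
Qed.

Definition rotation n : {perm 'I_n.+2} := perm (@addrI 'I_n.+2 1%R).

Lemma rotationX n m y : (rotation n ^+ m) y = (m%:R + y)%R.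
Proof.
elim: m => [|m IH]; first by rewrite expg0 perm1 add0r.
by rewrite expgSr permM IH permE /= addrA -mulrS.
Qed.

Lemma rotation_semiregular n m y :
  (rotation n ^+ m) y = y -> rotation n ^+ m = 1.
Proof.
rewrite rotationX -{2}(add0r y) => /addIr m0.
by apply/permP => z; rewrite rotationX m0 add0r perm1.
Qed.

Lemma rotation_neq1 n : rotation n != 1.
Proof.
apply/eqP => /(congr1 (fun r : {perm 'I_n.+2} => r 0%R)).
by rewrite permE perm1 /= addr0 => /eqP; rewrite oner_eq0.
Qed.

Lemma quasi_semiregular_diag k l (c : {perm 'I_k}) :
  quasi_semiregular c ->
  quasi_semiregular (prod_perm [ffun _ : 'I_l => c] 1).
Proof.
move=> /quasi_semiregularP [x [fixE semi]]; apply/quasi_semiregularP.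
have coord n (y : {ffun 'I_l -> 'I_k}) i :
    (prod_perm [ffun _ => c] 1 ^+ n) y i = (c ^+ n) (y i).
  by rewrite prod_perm1X ffunE.
exists [ffun _ => x]; split.
  move=> y; split=> [gy | ->].
    apply/ffunP => i; rewrite ffunE; apply/fixE.
    by rewrite -[c]expg1 -coord expg1 gy.
  apply/ffunP => i.
  by rewrite -[prod_perm _ _]expg1 coord !ffunE expg1; apply/fixE.
move=> n y yx gy.
have [i yi] : exists i, y i != x.
  apply/existsP; apply: contraR yx => /existsPn yx.
  by apply/eqP/ffunP => i; rewrite ffunE; apply/eqP/negPn/yx.
have cn : c ^+ n = 1 by apply: semi yi _; rewrite -coord gy.
by apply/permP => v; apply/ffunP => i'; rewrite coord cn !perm1.
Qed.

Theorem theorem5p1 (k l : nat) (hk : 3 <= k) (hl : 2 <= l) :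
  (exists g, g \in wreath_prod k l /\ quasi_semiregular g) /\
  (forall g, g \in wreath_prod k l -> quasi_semiregular g -> prime #[g] ->
     exists h : {ffun 'I_l -> {perm 'I_k}},
       g = prod_perm h 1 /\ forall i, quasi_semiregular (h i)).
Proof.
case: k hk => [|[|[|k]]] // _.
split.
  pose c := lift_perm ord0 ord0 (rotation k).
  exists (prod_perm [ffun _ => c] 1); split.
    by apply/imset2P; exists [ffun _ => c] (1 : {perm 'I_l}); rewrite ?inE.
  apply/quasi_semiregular_diag/quasi_semiregular_lift.
    exact: rotation_neq1.
  exact: rotation_semiregular.
move=> _ /imset2P [h s _ _ ->] qs_g pr_g.
have s1 := prime_quasi_semiregular_top_eq1 pr_g qs_g; subst s.
by exists h; split=> // i; apply: quasi_semiregular_base_component qs_g.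
Qed.
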